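(* Let $P=(p_{ij})$ be the transition matrix of an absorbing Markov chain on states $1,\dots,s$, where states $1,\dots,r$ are transient and states $r+1,\dots,s$ are absorbing. Assume all transition probabilities are rational and, for each transient state $i$, write $p_{ij}=r_{ij}/r_i$ with $r_i$ a positive integer and $r_{ij}$ nonnegative integers (so $\sum_{j=1}^s r_{ij}=r_i$). Fix a transient state $u$ and run the chip-moving procedure (Engel's algorithm) described below, starting from the critical loading. Then: (a) the procedure terminates, i.e. after finitely many moves the critical loading on the transient states recurs (whatever order is used for the available type 1 moves); (b) at termination, let $w_{uj}$ (for transient $j$) be the total number of chips moved out of state $j$ during the whole run (i.e. $r_j$ times the number of type 1 moves made at $j$), let $v_{uk}$ (for absorbing $k$) be the total number of chips moved into state $k$ during the run, and let $v_u=\sum_{k=r+1}^{s} v_{uk}$. Then $v_u>0$ and, for every transient state $j$ and every absorbing state $k$, \[ N_{uj}=\frac{w_{uj}}{v_u},\qquad B_{uk}=\frac{v_{uk}}{v_u}, \] where $N_{uj}$ is the expected number of visits (counting time $0$) to state $j$ for the chain started at $u$, and $B_{uk}$ is the probability that the chain started at $u$ is eventually absorbed in state $k$. Equivalently, writing $Q=(p_{ij})_{1\le i,j\le r}$ and $R=(p_{ik})_{1\le i\le r<k\le s}$, $N=(I-Q)^{-1}$ and $B=NR$.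
   Context: An absorbing Markov chain is a finite Markov chain in which absorbing states (states $j$ with $p_{jj}=1$) exist and from every state some absorbing state can be reached; the non-absorbing states are transient. Chip-moving procedure. A configuration is an assignment of a nonnegative integer number of chips to each state $1,\dots,s$. Two kinds of moves are allowed: - Type 1 move at a transient state $i$: allowed only if state $i$ holds at least $r_i$ chips; it removes $r_i$ chips from $i$ and sends $r_{ij}$ of them to state $j$ for each $j=1,\dots,s$. - Type 2 move: add one new chip to state $u$; allowed only when no type 1 move is possible. The critical loading (for $u$) is the configuration with $r_i-1$ chips on each transient state $i\ne u$, $r_u$ chips on $u$, and $0$ chips on every absorbing state. The procedure starts from the critical loading and repeats the following round: perform type 1 moves as long as any is possible; when none is possible, perform type 2 moves until state $u$ holds exactly $r_u$ chips; then, if the numbers of chips on the transient states $1,\dots,r$ coincide with the critical loading ($r_i-1$ on $i\ne u$, $r_u$ on $u$), stop; otherwise start another round. *)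

From mathcomp Require Import all_boot all_order all_algebra.
Set Implicit Arguments. Unset Strict Implicit. Unset Printing Implicit Defensive.
Import GRing.Theory Num.Theory.

(* Chain data: r transient states 'I_r, a absorbing states 'I_a (so s = r + a).
   For transient i:  p_ij = rT i j / rr i  (j transient),
                     p_ik = rA i k / rr i  (k absorbing).
   Absorbing states k have p_kk = 1. *)

Local Open Scope ring_scope.
Definition Qmx r (rr : 'I_r -> nat) (rT : 'I_r -> 'I_r -> nat) : 'M[rat]_r :=
  \matrix_(i, j) ((rT i j)%:R / (rr i)%:R).
Definition Rmx r a (rr : 'I_r -> nat) (rA : 'I_r -> 'I_a -> nat) : 'M[rat]_(r, a) :=
  \matrix_(i, k) ((rA i k)%:R / (rr i)%:R).

Definition Nmx r rr rT : 'M[rat]_r := invmx (1%:M - @Qmx r rr rT).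
Definition Bmx r a rr rT rA : 'M[rat]_(r, a) := @Nmx r rr rT *m @Rmx r a rr rA.

Local Close Scope ring_scope.
Definition absorbing_reachable r a (rT : 'I_r -> 'I_r -> nat)
    (rA : 'I_r -> 'I_a -> nat) : Prop :=
  forall i : 'I_r, exists (i' : 'I_r) (k : 'I_a),
    connect (fun x y => 0 < rT x y) i i' /\ 0 < rA i' k.

Record config (r a : nat) := Config { tr : 'I_r -> nat; ab : 'I_a -> nat }.

Inductive move (r : nat) := Fire of 'I_r | AddChip.
Arguments AddChip {r}.

Definition step r a (rr : 'I_r -> nat) (rT : 'I_r -> 'I_r -> nat)
    (rA : 'I_r -> 'I_a -> nat) (u : 'I_r)
    (c : config r a) (m : move r) (c' : config r a) : Prop :=
  match m with
  | Fire i =>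
      rr i <= tr c i /\
      (forall j, tr c' j = tr c j - (if j == i then rr i else 0) + rT i j) /\
      (forall k, ab c' k = ab c k + rA i k)
  | AddChip =>
      (* type 2 move: allowed only when no type 1 move is possible *)
      (forall i, tr c i < rr i) /\
      (forall j, tr c' j = tr c j + (j == u)) /\
      (forall k, ab c' k = ab c k)
  end.

Definition crit r (rr : 'I_r -> nat) (u : 'I_r) (j : 'I_r) : nat :=
  if j == u then rr u else (rr j).-1.

Definition is_initial r a rr u (c : config r a) : Prop :=
  (forall j, tr c j = crit rr u j) /\ (forall k, ab c k = 0).

(* the round ends after a type 2 move; stop iff transient chips are critical *)
Definition stops r a rr u (m : move r) (c' : config r a) : Prop :=
  m = AddChip /\ forall j, tr c' j = crit rr u j.

Definition fired_at r (m : move r) (j : 'I_r) : nat :=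
  match m with Fire i => (i == j) | AddChip => 0 end.
Definition chips_in r a (rA : 'I_r -> 'I_a -> nat) (m : move r) (k : 'I_a) : nat :=
  match m with Fire i => rA i k | AddChip => 0 end.

Definition wcount r (rr : 'I_r -> nat) (ms : nat -> move r) (n : nat) (j : 'I_r) : nat :=
  rr j * \sum_(t < n) fired_at (ms t) j.
Definition vcount r a (rA : 'I_r -> 'I_a -> nat) (ms : nat -> move r) (n : nat)
    (k : 'I_a) : nat :=
  \sum_(t < n) chips_in rA (ms t) k.

From mathcomp Require Import all_boot all_order all_algebra.
From mathcomp Require Import ring lra zify.
Import GRing.Theory Num.Theory Order.TTheory.
Set Implicit Arguments. Unset Strict Implicit. Unset Printing Implicit Defensive.
Local Open Scope ring_scope.

(* Let L = diag(r_i) (I - Q), i.e. L_ij = r_i [i = j] - r_ij. Making the type 1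
   moves counted by x and adding M chips at u changes the transient chips by
   M e_u - x L. A minimum principle (on an absorbing chain, a c with (I - Q) c >= 0
   is nonnegative) shows that I - Q is invertible with N >= 0, hence that d >= 0
   and d L <= 0 force d = 0.
   (a) Row u of N diag(1/r_i), cleared of denominators, gives natural numbers xs
   and m > 0 with xs L = m e_u. Before the procedure stops it fires each state j
   at most xs_j times and adds fewer than m chips: otherwise the configuration
   would differ from the critical loading by d L with d >= 0 and d L <= 0, which
   forbids the offending move or makes the critical loading recur. So the number
   of moves is bounded.
   (b) When the critical loading recurs after M added chips, the firing counts x
   satisfy x L = M e_u, so w = x diag(r_i) = M N_u and v_k = sum_i x_i r_ik
   = M B_uk; summing the entries of x L = M e_u, the absorbed chips total M. *)

Lemma connect_stable (T : finType) (e : rel T) (S : pred T) :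
  (forall x y, S x -> e x y -> S y) -> forall x y, S x -> connect e x y -> S y.
Proof.
move=> eS x y Sx /connectP [p ep ->]; elim: p x Sx ep => [|z p IHp] x Sx //=.
by case/andP=> exz ep; apply: IHp ep; apply: eS exz.
Qed.

Definition natrow n (x : 'I_n -> nat) : 'rV[rat]_n := \row_j (x j)%:R.

Lemma natrow_scale_rat n (z : 'rV[rat]_n) : (forall j, 0 <= z 0 j) ->
  exists2 D : nat, (0 < D)%N & exists x, natrow x = D%:R *: z.
Proof.
move=> z_ge0; pose den j := absz (denq (z 0 j)).
have den_gt0 j : (0 < den j)%N by rewrite absz_gt0 gt_eqF ?denq_gt0.
have denE j : (den j)%:R = (denq (z 0 j))%:~R :> rat.
  by rewrite natr_absz gtr0_norm ?denq_gt0.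
exists (\prod_j den j)%N; first by rewrite prodn_gt0.
exists (fun j => muln (absz (numq (z 0 j))) (\prod_(k | k != j) den k)%N).
apply/rowP=> j; rewrite !mxE natrM natr_absz ger0_norm ?numq_ge0 // numqE.
by rewrite [in RHS](bigD1 j) //= natrM denE; ring.
Qed.

Section AbsorbingChain.

Variables (r a : nat) (rr : 'I_r -> nat) (rT : 'I_r -> 'I_r -> nat)
  (rA : 'I_r -> 'I_a -> nat).
Hypothesis rr_pos : forall i, (0 < rr i)%N.
Hypothesis rows : forall i, (\sum_j rT i j + \sum_k rA i k)%N = rr i.
Hypothesis absorbing : absorbing_reachable rT rA.

Local Notation IsubQ := (1%:M - Qmx rr rT).
Local Notation N := (Nmx rr rT).

Definition laplacian : 'M[rat]_r :=
  \matrix_(i, j) ((i == j)%:R * (rr i)%:R - (rT i j)%:R).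

Definition rrdiag : 'M[rat]_r := diag_mx (\row_i (rr i)%:R).

Lemma rr_neq0 i : (rr i)%:R != 0 :> rat.
Proof. by rewrite pnatr_eq0 -lt0n. Qed.

Lemma laplacianE : laplacian = rrdiag *m IsubQ.
Proof.
apply/matrixP=> i j; rewrite mul_diag_mx !mxE.
by case: eqP => _; field; apply: rr_neq0.
Qed.

Lemma laplacian_mulmx (c : 'cV[rat]_r) i :
  (laplacian *m c) i 0 = (rr i)%:R * c i 0 - \sum_j (rT i j)%:R * c j 0.
Proof.
rewrite mxE (eq_bigr (fun j =>
  (i == j)%:R * (rr i)%:R * c j 0 - (rT i j)%:R * c j 0)) => [|j _]; last first.
  by rewrite mxE mulrBl.
rewrite sumrB (bigD1 i) //= eqxx big1 => [|j /negbTE]; last first.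
  by rewrite eq_sym => ->; rewrite !mul0r.
by rewrite mul1r addr0.
Qed.

Lemma mulmx_laplacian (d : 'rV[rat]_r) j :
  (d *m laplacian) 0 j = d 0 j * (rr j)%:R - \sum_i d 0 i * (rT i j)%:R.
Proof.
rewrite mxE (eq_bigr (fun i =>
  d 0 i * ((i == j)%:R * (rr i)%:R) - d 0 i * (rT i j)%:R)) => [|i _]; last first.
  by rewrite mxE mulrBr.
rewrite sumrB (bigD1 j) //= eqxx big1 => [|i /negbTE ->]; last by rewrite mul0r mulr0.
by rewrite mul1r addr0.
Qed.

Lemma laplacian_row_sum i : \sum_j laplacian i j = (\sum_k rA i k)%:R.
Proof.
rewrite (eq_bigr (fun j => (i == j)%:R * (rr i)%:R - (rT i j)%:R)) => [|j _]; last first.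
  by rewrite mxE.
rewrite sumrB (bigD1 i) //= eqxx big1 => [|j /negbTE]; last first.
  by rewrite eq_sym => ->; rewrite mul0r.
by rewrite mul1r addr0 -(rows i) natrD -natr_sum addrAC subrr add0r.
Qed.

Lemma laplacian_minimum_principle (c : 'cV[rat]_r) :
  (forall i, 0 <= (laplacian *m c) i 0) -> forall i, 0 <= c i 0.
Proof.
move=> Lc_ge0 i; rewrite leNgt; apply/negP => ci_lt0.
pose i0 := [arg min_(j < i) c j 0]%O.
have c_min j : c i0 0 <= c j 0 by rewrite /i0; case: arg_minP => // ? _; apply.
have at_min j : c j 0 = c i0 0 ->
    (\sum_k rA j k = 0)%N /\ forall j', (0 < rT j j')%N -> c j' 0 = c i0 0.
  move=> cj; have cj_lt0 : c j 0 < 0 by rewrite cj (le_lt_trans (c_min i)).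
  have Lj : (laplacian *m c) j 0 =
      (\sum_k rA j k)%:R * c j 0 - \sum_j' (rT j j')%:R * (c j' 0 - c j 0).
    under [X in _ - X]eq_bigr do rewrite mulrBr.
    by rewrite laplacian_mulmx -(rows j) sumrB -mulr_suml -!natr_sum natrD; ring.
  have step_ge0 j' : 0 <= (rT j j')%:R * (c j' 0 - c j 0).
    by rewrite mulr_ge0 ?ler0n // subr_ge0 cj.
  have drift_ge0 : 0 <= \sum_j' (rT j j')%:R * (c j' 0 - c j 0).
    by apply: sumr_ge0 => j' _; apply: step_ge0.
  have loss_le0 : (\sum_k rA j k)%:R * c j 0 <= 0 by rewrite mulr_ge0_le0 ?ler0n ?ltW.
  have := Lc_ge0 j; rewrite Lj => Lj_ge0.
  have /eqP : (\sum_k rA j k)%:R * c j 0 = 0 by lra.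
  rewrite mulf_eq0 (negbTE (ltr0_neq0 cj_lt0)) orbF pnatr_eq0 => /eqP loss0.
  split=> // j' rT_gt0.
  have drift0 : \sum_j' (rT j j')%:R * (c j' 0 - c j 0) = 0 by lra.
  have /eqP := psumr_eq0P (fun j' _ => step_ge0 j') drift0 (i := j') isT.
  by rewrite mulf_eq0 pnatr_eq0 gtn_eqF // subr_eq0 -cj => /eqP.
have [i' [k [i0i' rA_gt0]]] := absorbing i0.
have min_closed x y : c x 0 == c i0 0 -> (0 < rT x y)%N -> c y 0 == c i0 0.
  by move=> /eqP cx /(at_min x cx).2 ->.
have /eqP /at_min [loss0 _] := connect_stable min_closed (eqxx _) i0i'.
by move: loss0 => /eqP; rewrite sum_nat_eq0 => /forallP /(_ k); rewrite gtn_eqF.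
Qed.

Lemma IsubQ_col_ge0 (c : 'cV[rat]_r) :
  (forall i, 0 <= (IsubQ *m c) i 0) -> forall i, 0 <= c i 0.
Proof.
move=> Ac_ge0; apply: laplacian_minimum_principle => i.
by rewrite laplacianE -mulmxA mul_diag_mx mxE mulr_ge0 // mxE ler0n.
Qed.

Lemma unitmx_IsubQ : IsubQ \in unitmx.
Proof.
rewrite -unitmx_tr unitmxE unitfE; apply/negP => /det0P [v /negP v_neq0 vIQ0].
apply: v_neq0.
have IQv0 : IsubQ *m v^T = 0 by rewrite -[LHS]trmxK trmx_mul trmxK vIQ0 trmx0.
have v_ge0 : forall i, 0 <= v^T i 0 by apply: IsubQ_col_ge0 => i; rewrite IQv0 mxE.
have v_le0 : forall i, 0 <= (- v^T) i 0.
  by apply: IsubQ_col_ge0 => i; rewrite mulmxN IQv0 oppr0 mxE.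
apply/eqP/rowP=> i; apply/eqP; rewrite mxE eq_le.
by move: (v_ge0 i) (v_le0 i); rewrite !mxE oppr_ge0 => -> ->.
Qed.

Lemma Nmx_ge0 i j : 0 <= N i j.
Proof.
have := @IsubQ_col_ge0 (col j N) _ i; rewrite mxE; apply=> k.
by rewrite colE mulmxA mulmxV ?unitmx_IsubQ // mul1mx mxE ler0n.
Qed.

Lemma laplacian_solve (d y : 'rV[rat]_r) :
  d *m laplacian = y -> d *m rrdiag = y *m N.
Proof. by rewrite laplacianE mulmxA => <-; rewrite mulmxK ?unitmx_IsubQ. Qed.

Lemma laplacian_row_eq0 (d : 'rV[rat]_r) :
  (forall j, 0 <= d 0 j) -> (forall j, (d *m laplacian) 0 j <= 0) -> d = 0.
Proof.
move=> d_ge0 dL_le0; apply/rowP=> j; rewrite mxE; apply/eqP; rewrite eq_le d_ge0 andbT.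
have rr_gt0 : 0 < (rr j)%:R :> rat by rewrite ltr0n.
rewrite -(pmulr_lle0 _ rr_gt0).
have /rowP /(_ j) := laplacian_solve (erefl (d *m laplacian)).
rewrite mul_mx_diag !mxE => ->.
by apply: sumr_le0 => k _; rewrite mulr_le0_ge0 ?dL_le0 ?Nmx_ge0.
Qed.

Lemma laplacian_nat_potential u :
  exists2 m : nat, (0 < m)%N &
    exists xs, natrow xs *m laplacian = m%:R *: delta_mx 0 u.
Proof.
pose z := \row_j (N u j / (rr j)%:R).
have zL : z *m laplacian = delta_mx 0 u.
  rewrite laplacianE mulmxA.
  have -> : z *m rrdiag = row u N.
    by apply/rowP=> j; rewrite mul_mx_diag !mxE divfK ?rr_neq0.
  by rewrite -row_mul mulVmx ?unitmx_IsubQ // row1.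
have z_ge0 j : 0 <= z 0 j by rewrite mxE divr_ge0 ?Nmx_ge0 ?ler0n.
have [m m_gt0 [xs xsE]] := natrow_scale_rat z_ge0.
by exists m => //; exists xs; rewrite xsE -scalemxAl zL.
Qed.

Variable u : 'I_r.

Definition firings (ms : nat -> move r) t (j : 'I_r) : nat :=
  (\sum_(s < t) fired_at (ms s) j)%N.

Definition is_addchip (m : move r) : bool := if m is AddChip then true else false.

Definition addchips (ms : nat -> move r) t : nat := (\sum_(s < t) is_addchip (ms s))%N.

Lemma sum_fired_at (m : move r) (F : 'I_r -> nat) :
  (\sum_j fired_at m j * F j)%N = if m is Fire i then F i else 0%N.
Proof.
case: m => [i|] /=; last by rewrite big1.
rewrite (bigD1 i) //= eqxx mul1n big1 ?addn0 // => j ji.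
by rewrite eq_sym (negbTE ji).
Qed.

Lemma count_moves ms t : t = (\sum_j firings ms t j + addchips ms t)%N.
Proof.
rewrite /firings /addchips exchange_big -big_split /=.
rewrite -[t in LHS]card_ord -sum1_card; apply: eq_bigr => s _.
have := sum_fired_at (ms s) (fun _ => 1%N); under eq_bigr do rewrite muln1.
by case: (ms s) => [i|] /= ->.
Qed.

Lemma vcountE ms t k : vcount rA ms t k = (\sum_j firings ms t j * rA j k)%N.
Proof.
rewrite /vcount /firings; under [RHS]eq_bigr do rewrite big_distrl.
by rewrite exchange_big; apply: eq_bigr => s _; rewrite sum_fired_at; case: (ms s).
Qed.

Lemma natrow_firingsS ms t :
  natrow (firings ms t.+1) = natrow (firings ms t) + natrow (fired_at (ms t)).
Proof. by apply/rowP=> j; rewrite !mxE /firings big_ord_recr natrD. Qed.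

Lemma critE j : (crit rr u j)%:R = (rr j)%:R - 1 + (j == u)%:R :> rat.
Proof.
rewrite /crit; case: eqP => [->|_]; first by rewrite addrNK.
by rewrite -[rr j in RHS](prednK (rr_pos j)) -natr1 addrK addr0.
Qed.

Lemma step_balance c m c' : step rr rT rA u c m c' ->
  natrow (tr c') + natrow (fired_at m) *m laplacian =
  natrow (tr c) + (is_addchip m)%:R *: delta_mx 0 u.
Proof.
case: m => [i [rr_le [trE _]] | [_ [trE _]]]; apply/rowP=> j.
- have -> : natrow (fired_at (Fire i)) = delta_mx 0 i.
    by apply/rowP=> k; rewrite !mxE /= eq_sym.
  rewrite -rowE scale0r addr0 !mxE trE.
  case: (eqVneq j i) => [->|ji]; first by rewrite natrD natrB //=; ring.
  by rewrite subn0 natrD /=; ring.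
- have -> : natrow (fired_at (@AddChip r)) = 0 by apply/rowP=> k; rewrite !mxE.
  by rewrite mul0mx addr0 scale1r !mxE trE natrD eqxx.
Qed.

Lemma chip_balance ms cs t : is_initial rr u (cs 0%N) ->
  (forall s, (s < t)%N -> step rr rT rA u (cs s) (ms s) (cs s.+1)) ->
  natrow (tr (cs t)) + natrow (firings ms t) *m laplacian =
  natrow (crit rr u) + (addchips ms t)%:R *: delta_mx 0 u.
Proof.
move=> [init _]; elim: t => [|t IHt] steps.
  have -> : natrow (firings ms 0) = 0.
    by apply/rowP=> j; rewrite !mxE /firings big_ord0.
  rewrite mul0mx addr0 /addchips big_ord0 scale0r addr0.
  by apply/rowP=> j; rewrite !mxE init.
rewrite natrow_firingsS mulmxDl addrCA (step_balance (steps t _)) // addrA.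
rewrite [_ + natrow _]addrC IHt => [|s lt_st]; last by apply: steps; apply: ltnW.
by rewrite /addchips big_ord_recr natrD scalerDl addrA.
Qed.

Section Terminal.

Variables (ms : nat -> move r) (n : nat).
Hypothesis balance :
  natrow (firings ms n) *m laplacian = (addchips ms n)%:R *: delta_mx 0 u.
Hypothesis addchips_gt0 : (0 < addchips ms n)%N.

Lemma absorbed_total : (\sum_k vcount rA ms n k)%N = addchips ms n.
Proof.
apply/eqP; rewrite -(eqr_nat rat); apply/eqP.
transitivity (\sum_i (natrow (firings ms n) *m laplacian) 0 i); last first.
  rewrite balance (bigD1 u) //= big1 => [|i /negbTE ui]; last first.
    by rewrite !mxE ui mulr0.
  by rewrite !mxE /= eqxx mulr1 addr0.
rewrite natr_sum; under eq_bigr do rewrite vcountE natr_sum.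
under [RHS]eq_bigr do rewrite mxE.
rewrite exchange_big [RHS]exchange_big; apply: eq_bigr => j _ /=.
rewrite -mulr_sumr laplacian_row_sum natr_sum mulr_sumr mxE.
by apply: eq_bigr => k _; rewrite natrM.
Qed.

Lemma Nmx_row_balance j :
  N u j = (wcount rr ms n j)%:R / (addchips ms n)%:R.
Proof.
have /rowP /(_ j) := laplacian_solve balance.
rewrite mul_mx_diag -scalemxAl -rowE !mxE /wcount -/(firings ms n j) natrM => E.
by rewrite [_ * (firings _ _ _)%:R]mulrC E; field; rewrite pnatr_eq0 -lt0n.
Qed.

Lemma Bmx_row_balance k :
  Bmx rr rT rA u k = (vcount rA ms n k)%:R / (addchips ms n)%:R.
Proof.
rewrite /Bmx mxE vcountE natr_sum mulr_suml; apply: eq_bigr => j _.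
rewrite Nmx_row_balance !mxE /wcount -/(firings ms n j) !natrM; field.
by rewrite rr_neq0 pnatr_eq0 -lt0n addchips_gt0.
Qed.

End Terminal.

Section Termination.

Variables (ms : nat -> move r) (cs : nat -> config r a).
Hypothesis init : is_initial rr u (cs 0%N).
Hypothesis steps : forall t, step rr rT rA u (cs t) (ms t) (cs t.+1).
Variables (xs : 'I_r -> nat) (m : nat).
Hypothesis m_gt0 : (0 < m)%N.
Hypothesis potential : natrow xs *m laplacian = m%:R *: delta_mx 0 u.

Lemma chips_potential t j :
  (tr (cs t) j)%:R = (crit rr u j)%:R
    + ((natrow xs - natrow (firings ms t)) *m laplacian) 0 j
    - (m%:R - (addchips ms t)%:R) * (j == u)%:R.
Proof.
have /rowP /(_ j) := chip_balance init (fun s _ => steps s) (t := t).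
rewrite mulmxBl potential; move: (natrow (firings ms t) *m laplacian) => FL.
rewrite !mxE /= => E.
by rewrite -(addrK (FL 0 j) (tr (cs t) j)%:R) E; ring.
Qed.

Lemma fire_within_potential t i :
  (forall j, (firings ms t j <= xs j)%N) -> (addchips ms t < m)%N ->
  ms t = Fire i -> (firings ms t i < xs i)%N.
Proof.
move=> below M_lt ms_t; rewrite ltn_neqAle below andbT; apply/eqP => F_i.
have := steps t; rewrite ms_t => -[rr_le _].
set d := natrow xs - natrow (firings ms t).
have d_ge0 j : 0 <= d 0 j by rewrite !mxE subr_ge0 ler_nat.
have d_i0 : d 0 i = 0 by rewrite !mxE F_i subrr.
have dL_le0 : (d *m laplacian) 0 i <= 0.
  rewrite mulmx_laplacian d_i0 mul0r sub0r oppr_le0.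
  by apply: sumr_ge0 => k _; rewrite mulr_ge0 ?ler0n.
have K_ge1 : 1 <= m%:R - (addchips ms t)%:R :> rat.
  by rewrite lerBrDr addrC natr1 ler_nat.
have := chips_potential t i; rewrite critE -/d.
have : (rr i)%:R <= (tr (cs t) i)%:R :> rat by rewrite ler_nat.
by case: eqP => _ /=; rewrite ?mulr1n ?mulr0n; lra.
Qed.

Lemma last_chip_stops t :
  (forall j, (firings ms t j <= xs j)%N) -> ms t = AddChip ->
  (addchips ms t).+1 = m -> stops rr u (ms t) (cs t.+1).
Proof.
move=> below ms_t M_last; split=> // j.
have := steps t; rewrite ms_t => -[tr_lt [trE _]].
have M_t1 : addchips ms t.+1 = m by rewrite /addchips big_ord_recr ms_t /= addn1.
have F_t1 j' : firings ms t.+1 j' = firings ms t j'.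
  by rewrite /firings big_ord_recr ms_t /= addn0.
set d := natrow xs - natrow (firings ms t.+1).
have d_ge0 j' : 0 <= d 0 j' by rewrite !mxE subr_ge0 ler_nat F_t1.
have dL_le0 j' : (d *m laplacian) 0 j' <= 0.
  have := chips_potential t.+1 j'; rewrite M_t1 subrr mul0r subr0 critE trE natrD.
  have : (tr (cs t) j')%:R + 1 <= (rr j')%:R :> rat by rewrite natr1 ler_nat.
  lra.
apply/eqP; rewrite -(eqr_nat rat) chips_potential M_t1 -/d.
by rewrite (laplacian_row_eq0 d_ge0 dL_le0) mul0mx mxE subrr mul0r addr0 subr0.
Qed.

Lemma run_within_potential t :
  (exists2 s, (s < t)%N & stops rr u (ms s) (cs s.+1)) \/
  ((forall j, (firings ms t j <= xs j)%N) /\ (addchips ms t < m)%N).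
Proof.
elim: t => [|t [[s lt_st stop] | [below M_lt]]].
- by right; split=> [j|]; rewrite /firings /addchips big_ord0.
- by left; exists s => //; apply: ltnW.
case ms_t: (ms t) => [i|].
  right; split=> [j|]; last by rewrite /addchips big_ord_recr ms_t /= addn0.
  rewrite /firings big_ord_recr ms_t /=; case: (eqVneq i j) => [<-|_].
    by rewrite addn1 (fire_within_potential below M_lt ms_t).
  by rewrite addn0 below.
have M_t1 : addchips ms t.+1 = (addchips ms t).+1.
  by rewrite /addchips big_ord_recr ms_t /= addn1.
case: (ltnP (addchips ms t).+1 m) => [M_lt' | M_ge].
  right; split=> [j|]; last by rewrite M_t1.
  by rewrite /firings big_ord_recr ms_t /= addn0 below.
left; exists t => //; apply: last_chip_stops => //.
by apply/eqP; rewrite eqn_leq M_ge M_lt.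
Qed.

Lemma potential_run_stops : exists t, stops rr u (ms t) (cs t.+1).
Proof.
pose T := (\sum_j xs j + m)%N.
have [[s _ stop] | [below M_lt]] := run_within_potential T; first by exists s.
have := count_moves ms T; have : (\sum_j firings ms T j <= \sum_j xs j)%N.
  by apply: leq_sum => j _; apply: below.
move: M_lt; rewrite /T; lia.
Qed.

End Termination.

End AbsorbingChain.

Unset Implicit Arguments.

Theorem mainTheorem1 (r a : nat) (rr : 'I_r -> nat) (rT : 'I_r -> 'I_r -> nat)
    (rA : 'I_r -> 'I_a -> nat) (u : 'I_r)
    (rr_pos : forall i, (0 < rr i)%N)
    (rows : forall i, (\sum_j rT i j + \sum_k rA i k)%N = rr i)
    (absorbing : absorbing_reachable rT rA) :
  (forall (ms : nat -> move r) (cs : nat -> config r a),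
      is_initial rr u (cs 0%N) ->
      (forall t, step rr rT rA u (cs t) (ms t) (cs t.+1)) ->
      exists t, stops rr u (ms t) (cs t.+1)) /\
  (forall (n : nat) (ms : nat -> move r) (cs : nat -> config r a),
      is_initial rr u (cs 0%N) ->
      (forall t, (t < n)%N -> step rr rT rA u (cs t) (ms t) (cs t.+1)) ->
      (0 < n)%N -> stops rr u (ms n.-1) (cs n) ->
      (forall t, (t.+1 < n)%N -> ~ stops rr u (ms t) (cs t.+1)) ->
      let vu := (\sum_k vcount rA ms n k)%N in
      (0 < vu)%N /\
      (1%:M - Qmx rr rT) \in unitmx /\
      (forall j, Nmx rr rT u j = (wcount rr ms n j)%:R / vu%:R) /\
      (forall k, Bmx rr rT rA u k = (vcount rA ms n k)%:R / vu%:R)).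
Proof.
(* Part (b) holds at any recurrence of the critical loading, not only the first. *)
split=> [ms cs init steps | n ms cs init steps n_gt0 [last_add at_crit] _ vu].
  have [m m_gt0 [xs potential]] := laplacian_nat_potential rr_pos rows absorbing u.
  exact: (potential_run_stops rr_pos rows absorbing init steps m_gt0 potential).
have balance : natrow (firings ms n) *m laplacian rr rT =
    (addchips ms n)%:R *: delta_mx 0 u.
  apply: (addrI (natrow (tr (cs n)))); rewrite (chip_balance init steps).
  by congr (_ + _); apply/rowP=> j; rewrite !mxE at_crit.
have M_gt0 : (0 < addchips ms n)%N.
  by rewrite /addchips -(prednK n_gt0) big_ord_recr /= last_add addn1.
rewrite /vu (absorbed_total rows balance); split=> //.
split; first exact: unitmx_IsubQ rr_pos rows absorbing.
split=> [j | k].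
  exact: (Nmx_row_balance rr_pos rows absorbing balance M_gt0 j).
exact: (Bmx_row_balance rr_pos rows absorbing balance M_gt0 k).
Qed.
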